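(* Let $n\ge1$, $\mathcal{N}=\mathbb{C}^{2^n}$. For every $\phi\in\mathcal{N}$, every $i\in[n]$ and every $S\subseteq\{0,1\}^{n-1}$, $$|\phi^*E_{i,S}\phi-\phi^*\phi|\le 2^{n-1}I_i(\phi).$$
   Context: A vector $\phi=\sum_x\phi(x)|x\rangle\in\mathcal{N}$ is identified with the function $\phi:\{0,1\}^n\to\mathbb{C}$. $I_i(\phi)=\mathbb{E}_{x\in\{0,1\}^n}|\phi(x)-\phi(x\oplus e_i)|^2$, with $e_i$ the $i$-th unit vector. $E_{i,S}$ is the linear operator with $E_{i,S}|x\rangle=|x\oplus e_i\rangle$ if $(x_1,\dots,x_{i-1},x_{i+1},\dots,x_n)\in S$ and $E_{i,S}|x\rangle=|x\rangle$ otherwise. *)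

From HB Require Import structures.
From mathcomp Require Import all_boot all_order all_algebra.
From mathcomp Require Import complex.
Set Implicit Arguments. Unset Strict Implicit. Unset Printing Implicit Defensive.
Import Order.TTheory GRing.Theory Num.Theory.
Local Open Scope ring_scope.

Definition bits (n : nat) := {ffun 'I_n -> bool}.

Definition flip (n : nat) (x : bits n) (i : 'I_n) : bits n :=
  [ffun j => if j == i then ~~ x j else x j].

Definition drop_coord (n : nat) (x : bits n) (i : 'I_n) : bits n.-1 :=
  [ffun j => x (lift i j)].

(* E_{i,S}|x> as a basis vector index *)
Definition Ebasis (n : nat) (i : 'I_n) (S : {set bits n.-1}) (x : bits n) : bits n :=
  if drop_coord x i \in S then flip x i else x.

(* phi^* E_{i,S} phi = sum_x phi(x) <phi | E_{i,S} x> *)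
Definition quadE (R : rcfType) (n : nat) (i : 'I_n) (S : {set bits n.-1})
  (phi : bits n -> R[i]) : R[i] :=
  \sum_(x : bits n) (phi (Ebasis i S x))^* * phi x.

Definition sqnorm (R : rcfType) (n : nat) (phi : bits n -> R[i]) : R[i] :=
  \sum_(x : bits n) (phi x)^* * phi x.

Definition influence (R : rcfType) (n : nat) (i : 'I_n) (phi : bits n -> R[i]) : R[i] :=
  (2 ^+ n)^-1 * \sum_(x : bits n) `|phi x - phi (flip x i)| ^+ 2.

From HB Require Import structures.
From mathcomp Require Import all_boot all_order all_algebra.
From mathcomp Require Import complex.
Import Order.TTheory GRing.Theory Num.Theory.
Local Open Scope ring_scope.

(* Only the x with x_{-i} in S contribute to phi^* E_{i,S} phi - phi^* phi, and
   this set is closed under x |-> x xor e_i.  Pairing each such x with its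
   flip, the sum of (phi(x xor e_i) - phi x)^* phi x over the set is minus half
   the sum of |phi x - phi(x xor e_i)|^2 over it, while half of that sum over
   all x is exactly 2^(n-1) I_i(phi). *)

Section InvolutionSum.

Variables (C : numClosedFieldType) (T : finType) (f : T -> T) (P : pred T).
Hypotheses (fK : involutive f) (Pf : forall x, P (f x) = P x).

Lemma sum_conj_diff_involutionMn (phi : T -> C) :
  (\sum_(x | P x) (phi (f x) - phi x)^* * phi x) *+ 2 =
  - \sum_(x | P x) `|phi (f x) - phi x| ^+ 2.
Proof.
rewrite mulr2n {2}(reindex_inj (inv_inj fK)) (eq_bigl P) => [|x]; last exact: Pf.
rewrite -big_split -sumrN; apply: eq_bigr => x _ /=.
rewrite fK normCK -[phi x - _]opprB rmorphN mulNr -mulrBr.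
by rewrite mulrC -[phi x - _]opprB mulNr.
Qed.

Lemma norm_sum_conj_diff_involution (phi : T -> C) :
  `|\sum_(x | P x) (phi (f x) - phi x)^* * phi x| =
  (\sum_(x | P x) `|phi (f x) - phi x| ^+ 2) / 2.
Proof.
have two_neq0 : (2 : C) != 0 by rewrite pnatr_eq0.
have sq_ge0 : 0 <= \sum_(x | P x) `|phi (f x) - phi x| ^+ 2.
  by apply: sumr_ge0 => x _; rewrite exprn_ge0.
rewrite -[X in `|X|](mulfK two_neq0) mulr_natr sum_conj_diff_involutionMn.
by rewrite normrM normrN normfV ger0_norm // ger0_norm.
Qed.

End InvolutionSum.

Lemma flipK (n : nat) (i : 'I_n) : involutive (fun x : bits n => flip x i).
Proof. by move=> x; apply/ffunP => j; rewrite !ffunE; case: eqP; rewrite ?negbK. Qed.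

Lemma drop_coord_flip (n : nat) (i : 'I_n) (x : bits n) :
  drop_coord (flip x i) i = drop_coord x i.
Proof. by apply/ffunP => j; rewrite !ffunE eq_sym (negbTE (neq_lift _ _)). Qed.

Lemma quadE_subr_sqnorm (R : rcfType) (n : nat) (i : 'I_n) (S : {set bits n.-1})
    (phi : bits n -> R[i]) :
  quadE i S phi - sqnorm phi =
  \sum_(x | drop_coord x i \in S) (phi (flip x i) - phi x)^* * phi x.
Proof.
rewrite /quadE /sqnorm -sumrB (bigID (fun x => drop_coord x i \in S)) /=.
rewrite [X in _ + X]big1 ?addr0 => [|x xNS]; last by rewrite /Ebasis (negbTE xNS) subrr.
by apply: eq_bigr => x xS; rewrite /Ebasis xS -mulrBl rmorphB.
Qed.

Lemma expf_pred_div (F : fieldType) (x : F) (n : nat) :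
  (0 < n)%N -> x != 0 -> x ^+ n.-1 / x ^+ n = x^-1.
Proof.
case: n => // n _ x_neq0.
by rewrite exprS invfM mulrCA mulfV ?mulr1 // expf_neq0.
Qed.

Theorem lemma1 (R : rcfType) (n : nat) (hn : (1 <= n)%N)
  (phi : bits n -> R[i]) (i : 'I_n) (S : {set bits n.-1}) :
  `|quadE i S phi - sqnorm phi| <= 2 ^+ n.-1 * influence i phi.
Proof.
rewrite quadE_subr_sqnorm norm_sum_conj_diff_involution; last 2 first.
- exact: flipK.
- by move=> x; rewrite drop_coord_flip.
rewrite /influence mulrA expf_pred_div ?pnatr_eq0 // mulrC.
apply: ler_wpM2l; first by rewrite invr_ge0 ler0n.
rewrite [leRHS](bigID (fun x => drop_coord x i \in S)) /=.
rewrite -[leLHS]addr0 lerD ?sumr_ge0 // => [|x _]; last by rewrite exprn_ge0.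
by apply: ler_sum => x _; rewrite distrC.
Qed.
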